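(* For every integer $r\ge1$ there is a constant $C_r$ such that for every irreducible type $r$ random walk on a cyclic group $\mathbb{Z}/n\mathbb{Z}$ with transition matrix $A$, \[(1-|\lambda_m|)\,t_A(\tfrac12)\le C_r,\] where $|\lambda_m|=\max_{k\neq 0}|\lambda_k|$ is the largest absolute value of a nontrivial eigenvalue of $A$.
   Context: A type $r$ random walk on $\mathbb{Z}/n\mathbb{Z}$: $n\ge\pi^r$, and from $x$ the walk moves to $x+s$ with $s$ chosen uniformly among the $2r+1$ steps $\pm a_1,\dots,\pm a_r,0$ for some $a_1,\dots,a_r\in\mathbb{Z}/n\mathbb{Z}$. $A$ is its transition matrix with eigenvalues $\lambda_0=1,\lambda_1,\dots,\lambda_{n-1}$. With ${\bf v}_0=\frac1n{\bf 1}$ and ${\bf x}_0=(1,0,\dots,0)$, $d_A(t)=|A^t{\bf x}_0-{\bf v}_0|_1$ and $t_A(d)=\max\{t: d_A(t)\ge d\}$. *)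

From Stdlib Require Import Reals Lra Lia Arith List.
Open Scope R_scope.

Fixpoint sumR (n : nat) (f : nat -> R) : R :=
  match n with
  | O => 0
  | S m => sumR m f + f m
  end.

(* Elements of Z/nZ are represented by naturals 0..n-1 (arithmetic mod n).
   The step multiset of the type r walk with generators a 0, ..., a (r-1):
   0, +a_j, -a_j  (j < r), of size 2r+1. *)
Definition steps (n r : nat) (a : nat -> nat) : list nat :=
  0%nat :: flat_map (fun j => (a j mod n)%nat :: ((n - a j mod n) mod n)%nat :: nil)
                    (seq 0 r).

Definition trans (n r : nat) (a : nat -> nat) (i j : nat) : R :=
  (fold_right (fun s acc => (if Nat.eqb ((i + s) mod n) j then 1 else 0) + acc) 0
     (steps n r a)) / INR (2 * r + 1).

Definition Amul (n r : nat) (a : nat -> nat) (v : nat -> R) (i : nat) : R :=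
  sumR n (fun j => trans n r a i j * v j).

Fixpoint Apow (n r : nat) (a : nat -> nat) (t : nat) (v : nat -> R) : nat -> R :=
  match t with
  | O => v
  | S t' => Amul n r a (Apow n r a t' v)
  end.

Definition ev (k : nat) (i : nat) : R := if Nat.eqb i k then 1 else 0.

Definition irreducible (n r : nat) (a : nat -> nat) : Prop :=
  forall i j, (i < n)%nat -> (j < n)%nat -> exists t, Apow n r a t (ev j) i > 0.

Definition dA (n r : nat) (a : nat -> nat) (t : nat) : R :=
  sumR n (fun i => Rabs (Apow n r a t (ev 0) i - / INR n)).

Definition is_tA (n r : nat) (a : nat -> nat) (d : R) (t : nat) : Prop :=
  dA n r a t >= d /\ (forall s, dA n r a s >= d -> (s <= t)%nat).

(* lam is a nontrivial eigenvalue of A, i.e. one of lambda_1..lambda_{n-1}: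
   A is real symmetric with 1 an eigenvector of eigenvalue lambda_0 = 1, so
   the nontrivial eigenvalues are exactly the eigenvalues of A on 1^perp. *)
Definition nontriv_eig (n r : nat) (a : nat -> nat) (lam : R) : Prop :=
  exists v : nat -> R,
    (exists i, (i < n)%nat /\ v i <> 0) /\
    sumR n v = 0 /\
    (forall i, (i < n)%nat -> Amul n r a v i = lam * v i).

Definition is_lam_m (n r : nat) (a : nat -> nat) (M : R) : Prop :=
  (exists lam, nontriv_eig n r a lam /\ Rabs lam = M) /\
  (forall lam, nontriv_eig n r a lam -> Rabs lam <= M).

From Stdlib Require Import Reals Lra Lia List ZArith.
Open Scope R_scope.

(* The walk is diagonalised by the cosine characters  i |-> cos(2 pi k i / n): the
   character of frequency k is an eigenvector with eigenvalue
     lambda_k = (1 + 2 sum_j cos(2 pi k a_j / n)) / (2r+1),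
   and e_0 = (1/n) sum_k chi_k, so  d_A(t) <= sum_{k<>0} |lambda_k|^t.
   Write N(k) for the largest circular distance to 0 of the residues k a_j mod n.
   Elementary bounds on 1 - cos give
     1 - lambda_k <= 2 pi^2 (N(k)/n)^2   and   |lambda_k| <= 1 - 4/(2r+1) (N(k)/n)^2.
   Let q = min_{k<>0} N(k).  The map k |-> (floor(k a_j / q))_j (with signed residues)
   is injective on frequencies with N(k) < (m+1) q, which therefore number at most
   (2m+2)^r.  Grouping the frequencies by the size of N(k)/q and summing a geometric
   series shows that d_A(t) < 1/2 as soon as t (q/n)^2 exceeds a constant K_r.
   Hence t_A(1/2) (q/n)^2 <= K_r, while the frequency attaining q gives
   1 - |lambda_m| <= 2 pi^2 (q/n)^2; multiplying yields the theorem with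
   C_r = 2 pi^2 K_r. *)

Lemma sumR_ext n f g : (forall i, (i < n)%nat -> f i = g i) -> sumR n f = sumR n g.
Proof.
  induction n as [|n IH]; simpl; intros H; auto.
  rewrite IH by (intros; apply H; lia). rewrite H by lia. reflexivity.
Qed.

Lemma sumR_plus n f g : sumR n (fun i => f i + g i) = sumR n f + sumR n g.
Proof. induction n as [|n IH]; simpl; [ring | rewrite IH; ring]. Qed.

Lemma sumR_scal n c f : sumR n (fun i => c * f i) = c * sumR n f.
Proof. induction n as [|n IH]; simpl; [ring | rewrite IH; ring]. Qed.

Lemma sumR_const n c : sumR n (fun _ => c) = INR n * c.
Proof. induction n as [|n IH]; simpl sumR; [simpl; ring | rewrite IH, S_INR; ring]. Qed.

Lemma sumR_le n f g : (forall i, (i < n)%nat -> f i <= g i) -> sumR n f <= sumR n g.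
Proof.
  induction n as [|n IH]; simpl; intros H; [lra|].
  assert (f n <= g n) by (apply H; lia).
  assert (sumR n f <= sumR n g) by (apply IH; intros; apply H; lia). lra.
Qed.

Lemma sumR_nonneg n f : (forall i, (i < n)%nat -> 0 <= f i) -> 0 <= sumR n f.
Proof.
  intros H. replace 0 with (sumR n (fun _ => 0)) by (rewrite sumR_const; ring).
  apply sumR_le; auto.
Qed.

Lemma sumR_abs n f : Rabs (sumR n f) <= sumR n (fun i => Rabs (f i)).
Proof.
  induction n as [|n IH]; simpl; [rewrite Rabs_R0; lra|].
  eapply Rle_trans; [apply Rabs_triang | lra].
Qed.

Lemma sumR_single_le n f k :
  (forall i, (i < n)%nat -> 0 <= f i) -> (k < n)%nat -> f k <= sumR n f.
Proof.
  induction n as [|n IH]; simpl; intros H Hk; [lia|].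
  assert (0 <= f n) by (apply H; lia).
  destruct (Nat.eq_dec k n) as [->|Hkn].
  - assert (0 <= sumR n f) by (apply sumR_nonneg; intros; apply H; lia). lra.
  - assert (f k <= sumR n f) by (apply IH; [intros; apply H|]; lia). lra.
Qed.

Lemma sumR_swap n m (f : nat -> nat -> R) :
  sumR n (fun i => sumR m (fun j => f i j)) = sumR m (fun j => sumR n (fun i => f i j)).
Proof.
  induction n as [|n IH]; simpl; [rewrite sumR_const; ring|].
  rewrite IH, <- sumR_plus. reflexivity.
Qed.

Lemma sumR_first n f : sumR (S n) f = f 0%nat + sumR n (fun k => f (S k)).
Proof.
  induction n as [|n IH]; simpl; [ring|].
  simpl in IH. rewrite IH. ring.
Qed.

Lemma sumR_delta n m v :
  (m < n)%nat -> sumR n (fun j => (if Nat.eqb m j then 1 else 0) * v j) = v m.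
Proof.
  induction n as [|n IH]; intros H; simpl; [lia|].
  destruct (Nat.eq_dec m n) as [->|Hmn].
  - rewrite Nat.eqb_refl, (sumR_ext n _ (fun _ => 0)), sumR_const; [ring|].
    intros i Hi. destruct (Nat.eqb_spec n i); [lia | ring].
  - rewrite IH by lia. destruct (Nat.eqb_spec m n); [lia | ring].
Qed.

Lemma sumR_count n (P : nat -> bool) :
  sumR n (fun k => if P k then 1 else 0) = INR (length (filter P (seq 0 n))).
Proof.
  induction n as [|n IH]; [reflexivity|].
  rewrite seq_S, filter_app, length_app. simpl. rewrite IH.
  destruct (P n); simpl; rewrite ?plus_INR; simpl; ring.
Qed.

Lemma sumR_geometric N : sumR N (fun m => (1/8) ^ (S m)) = 1/7 - (1/7) * (1/8)^N.
Proof. induction N as [|N IH]; [simpl; field|]. cbn [sumR]. rewrite IH. simpl. field. Qed.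

Definition lsum (L : list nat) (g : nat -> R) : R := fold_right (fun s acc => g s + acc) 0 L.

Lemma lsum_app L1 L2 g : lsum (L1 ++ L2) g = lsum L1 g + lsum L2 g.
Proof. induction L1 as [|s L1 IH]; simpl; [ring | rewrite IH; ring]. Qed.

Lemma lsum_flat_map r (F : nat -> list nat) g :
  lsum (flat_map F (seq 0 r)) g = sumR r (fun j => lsum (F j) g).
Proof.
  induction r as [|r IH]; [reflexivity|].
  rewrite seq_S, flat_map_app, lsum_app, IH. simpl. rewrite app_nil_r. reflexivity.
Qed.

Lemma INR_pos n : (0 < n)%nat -> 0 < INR n.
Proof. apply lt_0_INR. Qed.

Definition cosk (n m : nat) : R := cos (2 * PI * INR m / INR n).

Lemma cosk_bound n m : -1 <= cosk n m <= 1.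
Proof. apply COS_bound. Qed.

Lemma cosk_0 n : cosk n 0 = 1.
Proof. unfold cosk. simpl. replace (2 * PI * 0 / INR n) with 0 by (unfold Rdiv; ring). apply cos_0. Qed.

Lemma cosk_mod n m : (0 < n)%nat -> cosk n (m mod n) = cosk n m.
Proof.
  intros Hn. pose proof (INR_pos n Hn). unfold cosk.
  rewrite (Nat.div_mod_eq m n) at 2. rewrite plus_INR, mult_INR.
  replace (2 * PI * (INR n * INR (m / n) + INR (m mod n)) / INR n) with
    (2 * PI * INR (m mod n) / INR n + 2 * INR (m / n) * PI) by (field; lra).
  symmetry; apply cos_period.
Qed.

Lemma cosk_mulmod n k m : (0 < n)%nat -> cosk n (k * (m mod n)) = cosk n (k * m).
Proof.
  intros Hn. rewrite <- cosk_mod, Nat.Div0.mul_mod_idemp_r by exact Hn. apply cosk_mod, Hn.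
Qed.

Lemma cosk_reflect n u : (0 < n)%nat -> (u <= n)%nat -> cosk n (n - u) = cosk n u.
Proof.
  intros Hn Hu. pose proof (INR_pos n Hn). unfold cosk. rewrite minus_INR by exact Hu.
  replace (2 * PI * (INR n - INR u) / INR n) with (- (2 * PI * INR u / INR n) + 2 * INR 1 * PI)
    by (simpl; field; lra).
  rewrite cos_period, cos_neg. reflexivity.
Qed.

(* Product formula: chi(i+s) + chi(i-s) = 2 chi(i) chi(s), the source of the eigenvalues. *)
Lemma cosk_sum_product n k i s : (0 < n)%nat -> (s < n)%nat ->
  cosk n (k * (i + s)) + cosk n (k * (i + (n - s) mod n)) = 2 * cosk n (k * i) * cosk n (k * s).
Proof.
  intros Hn Hs. pose proof (INR_pos n Hn). destruct (Nat.eq_dec s 0) as [->|Hs0].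
  - rewrite Nat.sub_0_r, Nat.Div0.mod_same, Nat.mul_0_r, cosk_0, Nat.add_0_r. ring.
  - rewrite Nat.mod_small by lia. unfold cosk. rewrite !mult_INR, !plus_INR, minus_INR by lia.
    set (x := 2 * PI * (INR k * INR i) / INR n). set (y := 2 * PI * (INR k * INR s) / INR n).
    replace (2 * PI * (INR k * (INR i + (INR n - INR s))) / INR n) with (x - y + 2 * INR k * PI)
      by (unfold x, y; field; lra).
    replace (2 * PI * (INR k * (INR i + INR s)) / INR n) with (x + y) by (unfold x, y; field; lra).
    rewrite cos_period, cos_plus, cos_minus. ring.
Qed.

Lemma cos_telescope N b :
  2 * sin b * sumR N (fun k => cos (INR k * (2 * b))) = sin (INR N * (2 * b) - b) + sin b.
Proof.
  induction N as [|N IH].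
  - simpl. replace (0 * (2 * b) - b) with (- b) by ring. rewrite sin_neg. ring.
  - simpl sumR. rewrite Rmult_plus_distr_l, IH, S_INR.
    replace ((INR N + 1) * (2 * b) - b) with (INR N * (2 * b) + b) by ring.
    rewrite sin_minus, sin_plus. ring.
Qed.

Lemma cosk_sum_zero n m : (0 < m)%nat -> (m < n)%nat -> sumR n (fun k => cosk n (k * m)) = 0.
Proof.
  intros Hm Hmn. pose proof (INR_pos n ltac:(lia)) as Hn. pose proof PI_RGT_0.
  set (b := PI * INR m / INR n).
  assert (Hsin : 0 < sin b).
  { assert (INR m < INR n) by (apply lt_INR; exact Hmn).
    assert (0 < INR m) by (apply INR_pos; exact Hm).
    apply sin_gt_0; unfold b.
    - apply Rdiv_lt_0_compat; [apply Rmult_lt_0_compat|]; lra.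
    - apply Rmult_lt_reg_r with (INR n); [lra|].
      unfold Rdiv. rewrite Rmult_assoc, Rinv_l by lra. nra. }
  pose proof (cos_telescope n b) as Htel.
  rewrite (sumR_ext n _ (fun k => cos (INR k * (2 * b)))).
  2:{ intros i Hi. unfold cosk, b. rewrite mult_INR. f_equal. field. lra. }
  replace (INR n * (2 * b) - b) with (- b + 2 * INR m * PI) in Htel by (unfold b; field; lra).
  rewrite sin_period, sin_neg in Htel.
  assert (Hz : 2 * sin b * sumR n (fun k => cos (INR k * (2 * b))) = 0) by lra.
  apply Rmult_integral in Hz. destruct Hz; lra.
Qed.

(* On [0,2], y/3 <= sin y <= y (Taylor bounds of order 3 and 5). *)
Lemma sin_linear_bounds y : 0 <= y <= 2 -> y / 3 <= sin y <= y.
Proof.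
  intros Hy. assert (PI2 := PI2_3_2).
  destruct (sin_bound y 0) as [Hlo Hhi]; try lra.
  replace (sin_approx y (2 * 0 + 1)) with (y - y^3/6) in Hlo
    by (unfold sin_approx, sin_term; simpl; field).
  replace (sin_approx y (2 * (0 + 1))) with (y - y^3/6 + y^5/120) in Hhi
    by (unfold sin_approx, sin_term; simpl; field).
  assert (0 <= y^3) by (apply pow_le; lra). assert (y^2 <= 4) by nra.
  assert (y^5 = y^3 * y^2) by ring. split; nra.
Qed.

Lemma one_minus_cosk_bounds n d : (0 < n)%nat -> (2 * d <= n)%nat ->
  2 * (INR d / INR n)^2 <= 1 - cosk n d <= 2 * PI^2 * (INR d / INR n)^2.
Proof.
  intros Hn Hd. pose proof (INR_pos n Hn). assert (PI2 := PI2_3_2). assert (P4 := PI_4).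
  set (w := INR d / INR n).
  assert (Hw : 0 <= w <= 1/2).
  { apply le_INR in Hd. rewrite mult_INR in Hd. simpl in Hd. pose proof (pos_INR d).
    unfold w; split; [unfold Rdiv; apply Rmult_le_pos; [lra | left; apply Rinv_0_lt_compat; lra]|].
    apply Rmult_le_reg_r with (INR n); [lra|]. unfold Rdiv. rewrite Rmult_assoc, Rinv_l; lra. }
  unfold cosk. replace (2 * PI * INR d / INR n) with (2 * (PI * w)) by (unfold w; field; lra).
  rewrite cos_2a_sin.
  assert (Hy : 0 <= PI * w <= 2) by nra.
  destruct (sin_linear_bounds _ Hy) as [Hs1 Hs2]. set (s := sin (PI * w)) in *.
  assert (w <= s) by nra.
  assert (s * s <= (PI * w) * (PI * w)) by (apply Rmult_le_compat; lra).
  split; nra.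
Qed.

Definition eigval n r (a : nat -> nat) k : R :=
  (1 + 2 * sumR r (fun j => cosk n (k * (a j mod n)))) / INR (2 * r + 1).

Definition charv n k : nat -> R := fun i => cosk n (k * i).

Lemma Amul_steps n r a v i : (0 < n)%nat ->
  Amul n r a v i = lsum (steps n r a) (fun s => v ((i + s) mod n)) / INR (2 * r + 1).
Proof.
  intros Hn. unfold Amul, trans. generalize (steps n r a). intros L.
  set (D := INR (2 * r + 1)).
  induction L as [|s L IH]; cbn [fold_right lsum].
  - rewrite (sumR_ext n _ (fun _ => 0)), sumR_const; [unfold Rdiv; ring|].
    intros; unfold Rdiv; ring.
  - set (cnt := fun j => fold_right (fun s0 acc => (if (i + s0) mod n =? j then 1 else 0) + acc) 0 L).
    rewrite (sumR_ext n _ (fun j => / D * ((if (i + s) mod n =? j then 1 else 0) * v j)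
                                     + (cnt j / D) * v j)).
    2:{ intros j _. unfold cnt. unfold Rdiv; ring. }
    rewrite sumR_plus, sumR_scal, sumR_delta by (apply Nat.mod_upper_bound; lia).
    unfold cnt. rewrite IH. unfold lsum, Rdiv. ring.
Qed.

Lemma charv_eigen n r a k i : (0 < n)%nat ->
  Amul n r a (charv n k) i = eigval n r a k * charv n k i.
Proof.
  intros Hn. rewrite Amul_steps by exact Hn. unfold steps, eigval, charv. simpl lsum.
  rewrite lsum_flat_map. simpl.
  rewrite (sumR_ext r _ (fun j => 2 * cosk n (k * i) * cosk n (k * (a j mod n)))).
  2:{ intros j Hj. rewrite Rplus_0_r, (cosk_mulmod n k (i + _)), (cosk_mulmod n k (i + _)) by exact Hn.
      apply cosk_sum_product; [exact Hn | apply Nat.mod_upper_bound; lia]. }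
  rewrite cosk_mulmod, Nat.add_0_r, sumR_scal by exact Hn. unfold Rdiv. ring.
Qed.

Lemma eigval_0 n r a : eigval n r a 0 = 1.
Proof.
  unfold eigval. rewrite (sumR_ext r _ (fun _ => 1)) by (intros; apply cosk_0).
  rewrite sumR_const, plus_INR, mult_INR. simpl. field. pose proof (pos_INR r). lra.
Qed.

Lemma Amul_ext n r a v w i :
  (forall j, (j < n)%nat -> v j = w j) -> Amul n r a v i = Amul n r a w i.
Proof. intros H. apply sumR_ext. intros j Hj. rewrite H; auto. Qed.

Lemma Amul_lincomb n r a (c : nat -> R) (V : nat -> nat -> R) i :
  Amul n r a (fun j => sumR n (fun k => c k * V k j)) i = sumR n (fun k => c k * Amul n r a (V k) i).
Proof.
  unfold Amul.
  rewrite (sumR_ext n _ (fun j => sumR n (fun k => c k * (trans n r a i j * V k j)))).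
  2:{ intros. rewrite <- sumR_scal. apply sumR_ext. intros; ring. }
  rewrite sumR_swap. apply sumR_ext. intros. rewrite sumR_scal. reflexivity.
Qed.

Lemma ev0_fourier n i : (i < n)%nat -> ev 0 i = / INR n * sumR n (fun k => charv n k i).
Proof.
  intros Hi. pose proof (INR_pos n ltac:(lia)). unfold ev, charv.
  destruct (Nat.eqb_spec i 0) as [->|Hi0].
  - rewrite (sumR_ext n _ (fun _ => 1)) by (intros; rewrite Nat.mul_0_r; apply cosk_0).
    rewrite sumR_const. field. lra.
  - rewrite cosk_sum_zero by lia. ring.
Qed.

Lemma Apow_fourier n r a t i : (i < n)%nat ->
  Apow n r a t (ev 0) i = / INR n * sumR n (fun k => eigval n r a k ^ t * charv n k i).
Proof.
  revert i. induction t as [|t IH]; intros i Hi; cbn [Apow].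
  - rewrite (ev0_fourier n i Hi). f_equal. apply sumR_ext. intros; ring.
  - rewrite (Amul_ext n r a _ (fun j => sumR n (fun k => (/ INR n * eigval n r a k ^ t) * charv n k j))).
    2:{ intros j Hj. rewrite IH by exact Hj. rewrite <- sumR_scal. apply sumR_ext; intros; ring. }
    rewrite Amul_lincomb, <- sumR_scal. apply sumR_ext. intros k Hk.
    rewrite charv_eigen by lia. cbn [pow]. ring.
Qed.

Lemma dA_le_eigval_sum n r a t : (0 < n)%nat ->
  dA n r a t <= sumR (n - 1) (fun k => Rabs (eigval n r a (S k)) ^ t).
Proof.
  intros Hn. pose proof (INR_pos n Hn). unfold dA.
  set (S0 := sumR (n - 1) (fun k => Rabs (eigval n r a (S k)) ^ t)).
  apply Rle_trans with (sumR n (fun _ => / INR n * S0));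
    [| rewrite sumR_const; right; field; lra].
  apply sumR_le. intros i Hi.
  assert (Hsplit : forall f, sumR n f = f 0%nat + sumR (n - 1) (fun k => f (S k))).
  { intros f. destruct n as [|n']; [lia|]. replace (S n' - 1)%nat with n' by lia. apply sumR_first. }
  rewrite Apow_fourier, Hsplit, eigval_0 by exact Hi. unfold charv at 1.
  rewrite Nat.mul_0_l, cosk_0, pow1.
  replace (/ INR n * (1 * 1 + sumR (n - 1) (fun k => eigval n r a (S k) ^ t * charv n (S k) i)) - / INR n)
    with (/ INR n * sumR (n - 1) (fun k => eigval n r a (S k) ^ t * charv n (S k) i)) by ring.
  rewrite Rabs_mult, Rabs_inv, (Rabs_right (INR n)) by lra.
  apply Rmult_le_compat_l; [left; apply Rinv_0_lt_compat; lra|].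
  eapply Rle_trans; [apply sumR_abs|]. apply sumR_le. intros k Hk.
  rewrite Rabs_mult, <- RPow_abs.
  assert (Rabs (charv n (S k) i) <= 1) by (apply Rabs_le, cosk_bound).
  assert (0 <= Rabs (eigval n r a (S k)) ^ t) by (apply pow_le, Rabs_pos).
  nra.
Qed.

Definition circ_dist n u : nat := Nat.min u (n - u).

Lemma circ_dist_half n u : (2 * circ_dist n u <= n)%nat.
Proof. unfold circ_dist. lia. Qed.

Fixpoint maxN r (f : nat -> nat) : nat :=
  match r with O => O | S r' => Nat.max (maxN r' f) (f r') end.

Lemma maxN_ge r f j : (j < r)%nat -> (f j <= maxN r f)%nat.
Proof.
  induction r as [|r IH]; simpl; intros Hj; [lia|].
  destruct (Nat.eq_dec j r) as [->|Hjr]; [lia|]. specialize (IH ltac:(lia)). lia.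
Qed.

Lemma maxN_lt r f B : (0 < B)%nat -> (forall j, (j < r)%nat -> (f j < B)%nat) -> (maxN r f < B)%nat.
Proof.
  induction r as [|r IH]; simpl; intros HB Hf; [lia|].
  specialize (IH HB (fun j Hj => Hf j ltac:(lia))). specialize (Hf r ltac:(lia)). lia.
Qed.

Lemma maxN_attained r f : (1 <= r)%nat -> exists j, (j < r)%nat /\ maxN r f = f j.
Proof.
  induction r as [|r IH]; intros Hr; [lia|]. simpl. destruct r as [|r'].
  - exists 0%nat. simpl. split; [lia | reflexivity].
  - destruct IH as [j [Hj Hm]]; [lia|].
    destruct (Nat.le_ge_cases (maxN (S r') f) (f (S r'))).
    + exists (S r'). split; lia.
    + exists j. split; lia.
Qed.

(* N(k) = max_j circ_dist (k a_j mod n): the sup-norm of (k a_j)_j on the torus (Z/nZ)^r. *)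
Definition circ_norm n r (a : nat -> nat) k : nat :=
  maxN r (fun j => circ_dist n ((k * a j) mod n)).

Definition rel_norm n r a k : R := INR (circ_norm n r a k) / INR n.

Lemma circ_norm_half n r a k : (2 * circ_norm n r a k <= n)%nat.
Proof.
  unfold circ_norm. destruct r as [|r]; [simpl; lia|].
  destruct (maxN_attained (S r) (fun j => circ_dist n ((k * a j) mod n))) as [j [_ ->]]; [lia|].
  apply circ_dist_half.
Qed.

Lemma rel_norm_bounds n r a k : (0 < n)%nat -> 0 <= rel_norm n r a k <= 1/2.
Proof.
  intros Hn. pose proof (INR_pos n Hn). pose proof (pos_INR (circ_norm n r a k)).
  pose proof (le_INR _ _ (circ_norm_half n r a k)) as Hh. rewrite mult_INR in Hh. simpl in Hh.
  unfold rel_norm. split.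
  - unfold Rdiv. apply Rmult_le_pos; [lra | left; apply Rinv_0_lt_compat; lra].
  - apply Rmult_le_reg_r with (INR n); [lra|]. unfold Rdiv. rewrite Rmult_assoc, Rinv_l; lra.
Qed.

Lemma cosk_circ_dist n k m : (0 < n)%nat ->
  cosk n (k * (m mod n)) = cosk n (circ_dist n ((k * m) mod n)).
Proof.
  intros Hn. rewrite cosk_mulmod, <- (cosk_mod n (k * m)) by exact Hn.
  unfold circ_dist. pose proof (Nat.mod_upper_bound (k * m) n ltac:(lia)).
  destruct (Nat.le_ge_cases ((k * m) mod n) (n - (k * m) mod n)).
  - rewrite Nat.min_l by assumption. reflexivity.
  - rewrite Nat.min_r, cosk_reflect by lia. reflexivity.
Qed.

Definition cosj n (a : nat -> nat) k j : R := cosk n (circ_dist n ((k * a j) mod n)).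

Lemma one_minus_eigval n r a k : (0 < n)%nat ->
  1 - eigval n r a k = 2 * sumR r (fun j => 1 - cosj n a k j) / INR (2 * r + 1).
Proof.
  intros Hn. unfold eigval.
  rewrite (sumR_ext r _ (cosj n a k)) by (intros; apply cosk_circ_dist, Hn).
  rewrite (sumR_ext r (fun j => 1 - cosj n a k j) (fun j => 1 + (-1) * cosj n a k j)) by (intros; ring).
  rewrite sumR_plus, sumR_scal, sumR_const, plus_INR, mult_INR. simpl.
  field. pose proof (pos_INR r). lra.
Qed.

Lemma one_plus_eigval n r a k : (0 < n)%nat ->
  1 + eigval n r a k = 2 * (1 + sumR r (fun j => 1 + cosj n a k j)) / INR (2 * r + 1).
Proof.
  intros Hn. unfold eigval.
  rewrite (sumR_ext r _ (cosj n a k)) by (intros; apply cosk_circ_dist, Hn).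
  rewrite sumR_plus, sumR_const, plus_INR, mult_INR. simpl.
  field. pose proof (pos_INR r). lra.
Qed.

Lemma one_minus_cosj_le n r a k j : (0 < n)%nat -> (j < r)%nat ->
  1 - cosj n a k j <= 2 * PI^2 * rel_norm n r a k ^ 2.
Proof.
  intros Hn Hj. pose proof (INR_pos n Hn).
  destruct (one_minus_cosk_bounds n _ Hn (circ_dist_half n ((k * a j) mod n))) as [_ Hup].
  eapply Rle_trans; [exact Hup|]. apply Rmult_le_compat_l; [pose proof (pow2_ge_0 PI); lra|].
  apply pow_incr. split.
  - unfold Rdiv. apply Rmult_le_pos; [apply pos_INR | left; apply Rinv_0_lt_compat; lra].
  - unfold rel_norm, Rdiv. apply Rmult_le_compat_r; [left; apply Rinv_0_lt_compat; lra|].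
    apply le_INR, (maxN_ge r (fun j => circ_dist n ((k * a j) mod n))), Hj.
Qed.

Lemma eigval_gap_upper n r a k : (0 < n)%nat ->
  1 - eigval n r a k <= 2 * PI^2 * rel_norm n r a k ^ 2.
Proof.
  intros Hn. rewrite one_minus_eigval by exact Hn.
  set (X := 2 * PI^2 * rel_norm n r a k ^ 2).
  assert (HX : 0 <= X) by (unfold X; pose proof (pow2_ge_0 PI); pose proof (pow2_ge_0 (rel_norm n r a k)); nra).
  assert (Hsum : sumR r (fun j => 1 - cosj n a k j) <= INR r * X).
  { rewrite <- sumR_const. apply sumR_le. intros j Hj. apply one_minus_cosj_le; assumption. }
  rewrite plus_INR, mult_INR. simpl. pose proof (pos_INR r).
  apply Rmult_le_reg_r with (2 * INR r + 1); [lra|].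
  unfold Rdiv. rewrite Rmult_assoc, Rinv_l by lra. nra.
Qed.

Definition contr (r : nat) : R := 4 / INR (2 * r + 1).

Lemma contr_pos r : 0 < contr r.
Proof. unfold contr. apply Rdiv_lt_0_compat; [lra | apply lt_0_INR; lia]. Qed.

Lemma eigval_abs_bound n r a k : (0 < n)%nat -> (1 <= r)%nat ->
  Rabs (eigval n r a k) <= 1 - contr r * rel_norm n r a k ^ 2.
Proof.
  intros Hn Hr. pose proof (rel_norm_bounds n r a k Hn) as Hw.
  assert (HD : 0 < INR (2 * r + 1)) by (apply lt_0_INR; lia).
  unfold contr. set (w := rel_norm n r a k) in *. set (D := INR (2 * r + 1)) in *.
  assert (Hminus : 4 / D * w ^ 2 <= 1 - eigval n r a k).
  { destruct (maxN_attained r (fun j => circ_dist n ((k * a j) mod n)) Hr) as [j0 [Hj0 Hm]].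
    destruct (one_minus_cosk_bounds n _ Hn (circ_dist_half n ((k * a j0) mod n))) as [Hlow _].
    assert (Hw0 : w = INR (circ_dist n ((k * a j0) mod n)) / INR n)
      by (unfold w, rel_norm, circ_norm; rewrite Hm; reflexivity).
    rewrite <- Hw0 in Hlow.
    assert (Hsingle : 1 - cosj n a k j0 <= sumR r (fun j => 1 - cosj n a k j)).
    { apply (sumR_single_le r (fun j => 1 - cosj n a k j)); [|exact Hj0].
      intros i _. pose proof (cosk_bound n (circ_dist n ((k * a i) mod n))). unfold cosj. lra. }
    rewrite one_minus_eigval by exact Hn. fold D.
    set (X := sumR r (fun j => 1 - cosj n a k j)) in *. unfold cosj in Hsingle.
    assert (0 < / D) by (apply Rinv_0_lt_compat; exact HD). unfold Rdiv. nra. }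
  assert (Hplus : 4 / D * w ^ 2 <= 1 + eigval n r a k).
  { rewrite one_plus_eigval by exact Hn. fold D.
    assert (0 <= sumR r (fun j => 1 + cosj n a k j)).
    { apply sumR_nonneg. intros i _. pose proof (cosk_bound n (circ_dist n ((k * a i) mod n))). unfold cosj. lra. }
    assert (w ^ 2 <= 1/4) by nra.
    assert (0 < / D) by (apply Rinv_0_lt_compat; exact HD).
    unfold Rdiv. nra. }
  unfold Rabs. destruct (Rcase_abs (eigval n r a k)); lra.
Qed.

(* With q the least norm of a nonzero
   frequency, at most (2m+2)^r frequencies k < n have N(k) < (m+1) q: two of them in
   the same cell of the grid of mesh q would differ by a nonzero frequency of norm < q. *)

Fixpoint tuples (L : list Z) (r : nat) : list (list Z) :=
  match r with
  | O => nil :: nil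
  | S r' => flat_map (fun x => map (cons x) (tuples L r')) L
  end.

Lemma tuples_length L r : length (tuples L r) = (length L ^ r)%nat.
Proof.
  induction r as [|r IH]; simpl; [reflexivity|]. rewrite <- IH. clear IH.
  generalize (tuples L r). intros T.
  induction L as [|x L IHL]; simpl; [reflexivity|]. rewrite length_app, length_map, IHL. lia.
Qed.

Lemma tuples_in L r l : length l = r -> (forall z, In z l -> In z L) -> In l (tuples L r).
Proof.
  revert l. induction r as [|r IH]; intros l Hl Hin; destruct l as [|z l]; simpl in *; try lia; auto.
  apply in_flat_map. exists z. split; [apply Hin; auto|]. apply in_map, IH; auto.
Qed.

Definition cell_range (m : nat) : list Z :=
  map (fun x => (Z.of_nat x - Z.of_nat (m + 1))%Z) (seq 0 (2 * m + 2)).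

Lemma cell_range_in m z : (- Z.of_nat (m + 1) <= z <= Z.of_nat m)%Z -> In z (cell_range m).
Proof.
  intros H. apply in_map_iff. exists (Z.to_nat (z + Z.of_nat (m + 1))).
  split; [rewrite Z2Nat.id by lia; lia | apply in_seq; lia].
Qed.

Lemma cell_range_length m : length (cell_range m) = (2 * m + 2)%nat.
Proof. unfold cell_range. rewrite length_map, length_seq. reflexivity. Qed.

Definition signed_res n (a : nat -> nat) k j : Z :=
  let u := ((k * a j) mod n)%nat in
  if Nat.leb u (n - u) then Z.of_nat u else (Z.of_nat u - Z.of_nat n)%Z.

Lemma signed_res_abs n a k j : (0 < n)%nat ->
  Z.abs (signed_res n a k j) = Z.of_nat (circ_dist n ((k * a j) mod n)).
Proof.
  intros Hn. unfold signed_res, circ_dist.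
  pose proof (Nat.mod_upper_bound (k * a j) n ltac:(lia)).
  destruct (Nat.leb_spec ((k * a j) mod n) (n - (k * a j) mod n)); lia.
Qed.

Lemma signed_res_cong n a k j : (0 < n)%nat ->
  (Z.of_nat n | signed_res n a k j - Z.of_nat (k * a j))%Z.
Proof.
  intros Hn. unfold signed_res. pose proof (Nat.div_mod_eq (k * a j) n) as Hd.
  set (u := ((k * a j) mod n)%nat) in *. set (quo := ((k * a j) / n)%nat) in *.
  destruct (Nat.leb_spec u (n - u)).
  - exists (- Z.of_nat quo)%Z. lia.
  - exists (- Z.of_nat quo - 1)%Z. lia.
Qed.

Lemma circ_dist_le_abs n z v : (0 < n)%nat -> (Z.of_nat n | z - Z.of_nat v)%Z ->
  (Z.of_nat (circ_dist n (v mod n)) <= Z.abs z)%Z.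
Proof.
  intros Hn [c Hc]. unfold circ_dist.
  pose proof (Nat.div_mod_eq v n) as Hd. pose proof (Nat.mod_upper_bound v n ltac:(lia)).
  set (u := (v mod n)%nat) in *. set (quo := (v / n)%nat) in *.
  assert (Hz : (z = Z.of_nat u + Z.of_nat n * (c + Z.of_nat quo))%Z) by lia.
  destruct (Z_le_gt_dec 0 (c + Z.of_nat quo)).
  - assert (0 <= Z.of_nat n * (c + Z.of_nat quo))%Z by nia. lia.
  - assert (Z.of_nat n * (c + Z.of_nat quo) <= - Z.of_nat n)%Z by nia. lia.
Qed.

Lemma same_quotient_close (y y' q : Z) : (0 < q)%Z -> (y / q = y' / q)%Z -> (Z.abs (y - y') < q)%Z.
Proof.
  intros Hq H. pose proof (Z.div_mod y q ltac:(lia)). pose proof (Z.div_mod y' q ltac:(lia)).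
  pose proof (Z.mod_pos_bound y q Hq). pose proof (Z.mod_pos_bound y' q Hq). rewrite H in *. lia.
Qed.

Lemma quotient_range (y q : Z) (m : nat) : (0 < q)%Z -> (Z.abs y < Z.of_nat (m + 1) * q)%Z ->
  (- Z.of_nat (m + 1) <= y / q <= Z.of_nat m)%Z.
Proof.
  intros Hq H. pose proof (Z.div_mod y q ltac:(lia)). pose proof (Z.mod_pos_bound y q Hq).
  set (d := (y / q)%Z) in *. split.
  - destruct (Z_le_gt_dec (- Z.of_nat (m + 1)) d); auto.
    assert (q * d <= q * (- Z.of_nat (m + 1) - 1))%Z by (apply Z.mul_le_mono_nonneg_l; lia). nia.
  - destruct (Z_le_gt_dec d (Z.of_nat m)); auto.
    assert (q * (Z.of_nat m + 1) <= q * d)%Z by (apply Z.mul_le_mono_nonneg_l; lia). nia.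
Qed.

Lemma map_seq_pointwise (f g : nat -> Z) r :
  map f (seq 0 r) = map g (seq 0 r) -> forall j, (j < r)%nat -> f j = g j.
Proof.
  induction r as [|r IH]; intros H j Hj; [lia|]. rewrite seq_S, !map_app in H. simpl in H.
  apply app_inj_tail in H. destruct H as [H Hr].
  destruct (Nat.eq_dec j r) as [->|Hjr]; [exact Hr | apply IH; auto; lia].
Qed.

Definition cell n r a q k : list Z := map (fun j => (signed_res n a k j / Z.of_nat q)%Z) (seq 0 r).

Section Counting.

Variables (n r q : nat) (a : nat -> nat).
Hypothesis (Hn : (0 < n)%nat) (Hq : (0 < q)%nat).
Hypothesis Hmin : forall d, (1 <= d < n)%nat -> (q <= circ_norm n r a d)%nat.

Lemma cell_injective k k' : (k' < k < n)%nat -> cell n r a q k <> cell n r a q k'.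
Proof.
  intros Hk Hc.
  assert (Hsmall : (circ_norm n r a (k - k') < q)%nat).
  { apply maxN_lt; [exact Hq|]. intros j Hj.
    pose proof (same_quotient_close _ _ (Z.of_nat q) ltac:(lia) (map_seq_pointwise _ _ r Hc j Hj)) as Hclose.
    assert (Hdv : (Z.of_nat n | (signed_res n a k j - signed_res n a k' j) - Z.of_nat ((k - k') * a j))%Z).
    { destruct (signed_res_cong n a k j Hn) as [c1 H1], (signed_res_cong n a k' j Hn) as [c2 H2].
      exists (c1 - c2)%Z. rewrite Nat2Z.inj_mul, Nat2Z.inj_sub by lia.
      rewrite Nat2Z.inj_mul in H1, H2. lia. }
    pose proof (circ_dist_le_abs n _ _ Hn Hdv). lia. }
  specialize (Hmin (k - k')%nat ltac:(lia)). lia.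
Qed.

Lemma cell_in_range m k : (circ_norm n r a k < (m + 1) * q)%nat ->
  In (cell n r a q k) (tuples (cell_range m) r).
Proof.
  intros Hk. apply tuples_in; [unfold cell; rewrite length_map, length_seq; reflexivity|].
  intros z Hz. apply in_map_iff in Hz. destruct Hz as [j [<- Hj]]. apply in_seq in Hj.
  apply cell_range_in, quotient_range; [lia|]. rewrite signed_res_abs by exact Hn.
  assert (circ_dist n ((k * a j) mod n) <= circ_norm n r a k)%nat
    by (apply (maxN_ge r (fun j => circ_dist n ((k * a j) mod n))); lia).
  nia.
Qed.

Lemma small_norm_count m :
  (length (filter (fun k => Nat.ltb (circ_norm n r a k) ((m + 1) * q)) (seq 0 n)) <= (2 * m + 2) ^ r)%nat.
Proof.
  set (F := filter (fun k => Nat.ltb (circ_norm n r a k) ((m + 1) * q)) (seq 0 n)).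
  rewrite <- (length_map (cell n r a q) F), <- cell_range_length, <- tuples_length.
  apply NoDup_incl_length.
  - apply NoDup_map_NoDup_ForallPairs; [|apply NoDup_filter, seq_NoDup].
    intros x y Hx Hy Hxy. apply filter_In in Hx, Hy.
    destruct Hx as [Hx _], Hy as [Hy _]. apply in_seq in Hx, Hy.
    destruct (Nat.lt_total x y) as [H|[H|H]]; [| exact H |].
    + exfalso. apply (cell_injective y x); [lia | auto].
    + exfalso. apply (cell_injective x y); [lia | auto].
  - intros l Hl. apply in_map_iff in Hl. destruct Hl as [k [<- HkF]].
    apply filter_In in HkF. destruct HkF as [_ Hlt]. apply Nat.ltb_lt in Hlt.
    apply cell_in_range, Hlt.
Qed.

End Counting.

Lemma exp_nat_mult x N : exp (INR N * x) = exp x ^ N.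
Proof.
  induction N as [|N IH]; [simpl; rewrite Rmult_0_l; apply exp_0|].
  rewrite S_INR, Rmult_plus_distr_r, Rmult_1_l, exp_plus, IH. simpl. ring.
Qed.

Lemma exp_m1_le_half : exp (-1) <= 1/2.
Proof.
  assert (Hinv : exp (-1) * exp 1 = 1) by (rewrite <- exp_plus; replace (-1 + 1) with 0 by ring; apply exp_0).
  pose proof (exp_ineq1_le 1). pose proof (exp_pos (-1)). nra.
Qed.

Lemma pow_decay x c t N : 0 <= x <= 1 - c -> INR N <= c * INR t -> x ^ t <= (1/2) ^ N.
Proof.
  intros Hx HN.
  assert (Hexp : x <= exp (- c)) by (pose proof (exp_ineq1_le (- c)); lra).
  apply Rle_trans with (exp (- c) ^ t); [apply pow_incr; lra|].
  rewrite <- exp_nat_mult.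
  apply Rle_trans with (exp (INR N * (-1))).
  - destruct (Req_dec (INR t * - c) (INR N * (-1))) as [->|Hne]; [lra|].
    left. apply exp_increasing. lra.
  - rewrite exp_nat_mult. apply pow_incr. split; [left; apply exp_pos | apply exp_m1_le_half].
Qed.

Definition mix_const (r : nat) : R := INR (2 * r + 3) / contr r.

Definition level_weight (r m : nat) : R := (1/2) ^ ((2 * r + 3) * (m + 1)).

Lemma level_weight_nonneg r m : 0 <= level_weight r m.
Proof. apply pow_le. lra. Qed.

(* (2m+4)^r <= 4^(r(m+1)), comparing the base with 4^(m+1). *)
Lemma grid_size_le m r : ((2 * m + 4) ^ r <= 2 ^ (2 * r * (m + 1)))%nat.
Proof.
  assert (Hbase : (2 * m + 4 <= 2 ^ (2 * (m + 1)))%nat).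
  { induction m as [|m IH]; [simpl; lia|].
    replace (2 * (S m + 1))%nat with (2 + 2 * (m + 1))%nat by lia.
    rewrite Nat.pow_add_r. simpl (2 ^ 2)%nat. lia. }
  replace (2 * r * (m + 1))%nat with (2 * (m + 1) * r)%nat by lia.
  rewrite Nat.pow_mul_r. apply Nat.pow_le_mono_l, Hbase.
Qed.

Lemma level_mass_le m r : level_weight r m * INR ((2 * S m + 2) ^ r) <= (1/8) ^ (S m).
Proof.
  unfold level_weight. replace (2 * S m + 2)%nat with (2 * m + 4)%nat by lia.
  replace (S m) with (m + 1)%nat by lia.
  pose proof (le_INR _ _ (grid_size_le m r)) as H. rewrite (pow_INR 2) in H. simpl (INR 2) in H.
  replace ((2 * r + 3) * (m + 1))%nat with (3 * (m + 1) + 2 * r * (m + 1))%nat by lia.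
  rewrite pow_add. replace (1/8) with ((1/2)^3) by field. rewrite <- pow_mult.
  assert (HB : (1/2) ^ (2 * r * (m + 1)) * (1 + 1) ^ (2 * r * (m + 1)) = 1).
  { rewrite <- Rpow_mult_distr. replace (1/2 * (1 + 1)) with 1 by field. apply pow1. }
  assert (0 < (1/2) ^ (3 * (m + 1))) by (apply pow_lt; lra).
  assert (0 < (1/2) ^ (2 * r * (m + 1))) by (apply pow_lt; lra).
  set (A := (1/2) ^ (3 * (m + 1))) in *. set (B := (1/2) ^ (2 * r * (m + 1))) in *.
  assert (B * INR ((2 * m + 4) ^ r) <= B * (1 + 1) ^ (2 * r * (m + 1)))
    by (apply Rmult_le_compat_l; lra).
  nra.
Qed.

Section Mixing.

Variables (n r q t : nat) (a : nat -> nat).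
Hypothesis (Hr : (1 <= r)%nat) (Hn : (0 < n)%nat) (Hq : (0 < q)%nat).
Hypothesis Hmin : forall d, (1 <= d < n)%nat -> (q <= circ_norm n r a d)%nat.
Hypothesis Hlong : INR t * (INR q / INR n) ^ 2 > mix_const r.

Lemma eigval_pow_level k m : ((m + 1) * q <= circ_norm n r a k)%nat ->
  Rabs (eigval n r a k) ^ t <= level_weight r m.
Proof.
  intros Hk. pose proof (INR_pos n Hn). pose proof (contr_pos r) as Hc.
  pose proof (rel_norm_bounds n r a k Hn). pose proof (Rabs_pos (eigval n r a k)).
  apply (pow_decay _ (contr r * rel_norm n r a k ^ 2)).
  { pose proof (eigval_abs_bound n r a k Hn Hr). lra. }
  set (x := INR (m + 1)). set (u := INR q / INR n) in *.
  assert (Hx : 1 <= x) by (apply (le_INR 1); lia).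
  assert (Hu : 0 <= u) by (unfold u, Rdiv; apply Rmult_le_pos; [apply pos_INR | left; apply Rinv_0_lt_compat; lra]).
  assert (Hw : x * u <= rel_norm n r a k).
  { unfold x, u, rel_norm, Rdiv. rewrite <- Rmult_assoc. apply Rmult_le_compat_r.
    - left; apply Rinv_0_lt_compat; lra.
    - rewrite <- mult_INR. apply le_INR, Hk. }
  assert (Hw2 : (x * u) ^ 2 <= rel_norm n r a k ^ 2) by (apply pow_incr; nra).
  assert (HK : contr r * mix_const r = INR (2 * r + 3)) by (unfold mix_const; field; lra).
  assert (HtK : contr r * mix_const r <= contr r * (INR t * u ^ 2)) by (apply Rmult_le_compat_l; lra).
  assert (H3 : 0 <= INR (2 * r + 3)) by apply pos_INR. pose proof (pos_INR t).
  rewrite mult_INR. fold x. rewrite HK in HtK.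
  assert (INR (2 * r + 3) * x <= x ^ 2 * (contr r * (INR t * u ^ 2))).
  { set (Y := contr r * (INR t * u ^ 2)) in *.
    assert (0 <= (x ^ 2 - x) * Y) by (apply Rmult_le_pos; [simpl; nra | lra]). nra. }
  assert (x ^ 2 * (contr r * (INR t * u ^ 2)) <= contr r * rel_norm n r a k ^ 2 * INR t).
  { replace (x ^ 2 * (contr r * (INR t * u ^ 2))) with (contr r * (x * u) ^ 2 * INR t) by ring.
    apply Rmult_le_compat_r; [lra|]. apply Rmult_le_compat_l; lra. }
  lra.
Qed.

Lemma eigval_pow_le_levels k : (1 <= k < n)%nat ->
  Rabs (eigval n r a k) ^ t
  <= sumR n (fun m => (if Nat.ltb (circ_norm n r a k) ((S m + 1) * q) then 1 else 0) * level_weight r m).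
Proof.
  intros Hk. set (Nk := circ_norm n r a k). pose proof (Hmin k Hk) as Hqk. fold Nk in Hqk.
  set (m0 := (Nk / q - 1)%nat).
  pose proof (Nat.div_mod_eq Nk q). pose proof (Nat.mod_upper_bound Nk q ltac:(lia)).
  assert (H1 : (1 <= Nk / q)%nat) by (apply Nat.div_le_lower_bound; lia).
  assert (Hlo : ((m0 + 1) * q <= Nk)%nat) by (unfold m0; nia).
  assert (Hhi : (Nk < (S m0 + 1) * q)%nat) by (unfold m0; nia).
  assert (Hm0 : (m0 < n)%nat).
  { pose proof (circ_norm_half n r a k) as Hhalf. fold Nk in Hhalf.
    assert (Nk / q <= Nk)%nat by (apply Nat.Div0.div_le_upper_bound; nia).
    unfold m0. lia. }
  eapply Rle_trans; [|apply (sumR_single_le n _ m0); [|exact Hm0]].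
  - apply Nat.ltb_lt in Hhi. cbv beta. rewrite Hhi, Rmult_1_l. apply eigval_pow_level, Hlo.
  - intros i _. apply Rmult_le_pos; [destruct (Nat.ltb _ _); lra | apply level_weight_nonneg].
Qed.

Lemma dA_lt_half : dA n r a t < 1/2.
Proof.
  set (H := fun k => sumR n (fun m =>
              (if Nat.ltb (circ_norm n r a k) ((S m + 1) * q) then 1 else 0) * level_weight r m)).
  assert (Hpos : forall k, 0 <= H k).
  { intros k. apply sumR_nonneg. intros i _.
    apply Rmult_le_pos; [destruct (Nat.ltb _ _); lra | apply level_weight_nonneg]. }
  eapply Rle_lt_trans; [apply dA_le_eigval_sum, Hn|].
  eapply Rle_lt_trans; [apply (sumR_le _ _ (fun k => H (S k))); intros k Hk; apply eigval_pow_le_levels; lia|].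
  assert (Hfirst : sumR (n - 1) (fun k => H (S k)) <= sumR n H).
  { destruct n as [|n']; [lia|]. replace (S n' - 1)%nat with n' by lia.
    rewrite sumR_first. pose proof (Hpos 0%nat). lra. }
  eapply Rle_lt_trans; [exact Hfirst|]. unfold H. rewrite sumR_swap.
  rewrite (sumR_ext n _ (fun m => level_weight r m
             * sumR n (fun k => if Nat.ltb (circ_norm n r a k) ((S m + 1) * q) then 1 else 0))).
  2:{ intros m _. rewrite <- sumR_scal. apply sumR_ext. intros; ring. }
  eapply Rle_lt_trans; [apply (sumR_le _ _ (fun m => (1/8) ^ (S m)))|].
  - intros m _. rewrite sumR_count.
    eapply Rle_trans; [|apply (level_mass_le m r)].
    apply Rmult_le_compat_l; [apply level_weight_nonneg|].
    apply le_INR, small_norm_count; assumption.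
  - rewrite sumR_geometric. assert (0 < (1/8) ^ n) by (apply pow_lt; lra). lra.
Qed.

End Mixing.

Lemma nat_argmin (f : nat -> nat) N : (1 <= N)%nat ->
  exists k, (k < N)%nat /\ forall d, (d < N)%nat -> (f k <= f d)%nat.
Proof.
  induction N as [|N IH]; intros HN; [lia|]. destruct N as [|N'].
  - exists 0%nat. split; [lia|]. intros d Hd. replace d with 0%nat by lia. lia.
  - destruct IH as [k [Hk Hm]]; [lia|].
    destruct (Nat.le_ge_cases (f k) (f (S N'))).
    + exists k. split; [lia|]. intros d Hd.
      destruct (Nat.eq_dec d (S N')) as [->|]; [lia | apply Hm; lia].
    + exists (S N'). split; [lia|]. intros d Hd.
      destruct (Nat.eq_dec d (S N')) as [->|]; [lia|]. specialize (Hm d ltac:(lia)). lia.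
Qed.

Lemma least_circ_norm n r a : (2 <= n)%nat ->
  exists k0, (1 <= k0 < n)%nat /\ forall d, (1 <= d < n)%nat -> (circ_norm n r a k0 <= circ_norm n r a d)%nat.
Proof.
  intros Hn. destruct (nat_argmin (fun d => circ_norm n r a (S d)) (n - 1) ltac:(lia)) as [k [Hk Hmin]].
  exists (S k). split; [lia|]. intros d Hd.
  specialize (Hmin (d - 1)%nat ltac:(lia)). replace (S (d - 1)) with d in Hmin by lia. exact Hmin.
Qed.

(* Each nonzero frequency gives a nontrivial eigenvalue (its character is orthogonal to 1). *)
Lemma eigval_nontriv n r a k : (1 <= k < n)%nat -> nontriv_eig n r a (eigval n r a k).
Proof.
  intros Hk. exists (charv n k). split; [|split].
  - exists 0%nat. split; [lia|]. unfold charv. rewrite Nat.mul_0_r, cosk_0. lra.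
  - unfold charv. rewrite (sumR_ext n _ (fun i => cosk n (i * k))) by (intros; rewrite Nat.mul_comm; reflexivity).
    apply cosk_sum_zero; lia.
  - intros i _. apply charv_eigen. lia.
Qed.

Lemma spectral_gap_le n r a M k : (1 <= k < n)%nat -> is_lam_m n r a M ->
  1 - M <= 2 * PI^2 * rel_norm n r a k ^ 2.
Proof.
  intros Hk [_ HM]. pose proof (HM _ (eigval_nontriv n r a k Hk)).
  pose proof (eigval_gap_upper n r a k ltac:(lia)). pose proof (Rle_abs (eigval n r a k)). lra.
Qed.

Lemma mixing_time_le n r a t k0 : (1 <= r)%nat -> (1 <= k0 < n)%nat ->
  (forall d, (1 <= d < n)%nat -> (circ_norm n r a k0 <= circ_norm n r a d)%nat) ->
  dA n r a t >= 1/2 -> INR t * rel_norm n r a k0 ^ 2 <= mix_const r.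
Proof.
  intros Hr Hk0 Hmin Hdist. unfold rel_norm.
  destruct (Rle_lt_dec (INR t * (INR (circ_norm n r a k0) / INR n) ^ 2) (mix_const r)) as [Hle|Hgt];
    [exact Hle|].
  destruct (Nat.eq_dec (circ_norm n r a k0) 0) as [Hq0|Hq0].
  - rewrite Hq0 in Hgt. simpl in Hgt. unfold mix_const in Hgt.
    pose proof (contr_pos r). assert (0 < INR (2 * r + 3)) by (apply lt_0_INR; lia).
    assert (0 < INR (2 * r + 3) / contr r) by (apply Rdiv_lt_0_compat; lra).
    unfold Rdiv in Hgt. lra.
  - pose proof (dA_lt_half n r (circ_norm n r a k0) t a Hr ltac:(lia) ltac:(lia) Hmin Hgt). lra.
Qed.

(* The hypothesis pi^r <= n with r >= 1 guarantees that Z/nZ has nonzero elements. *)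
Lemma order_ge_2 r n : (1 <= r)%nat -> PI ^ r <= INR n -> (2 <= n)%nat.
Proof.
  intros Hr Hpi. assert (H3 : 3 < PI) by (pose proof PI2_3_2; lra).
  assert (PI <= PI ^ r) by (rewrite <- (pow_1 PI) at 1; apply Rle_pow; [lra | exact Hr]).
  destruct (le_lt_dec 2 n) as [|Hlt]; [assumption|].
  assert (INR n <= 1) by (apply (le_INR n 1); lia). lra.
Qed.

Theorem mainTheorem5 :
  forall r : nat, (1 <= r)%nat ->
  exists C : R,
    forall (n : nat) (a : nat -> nat),
      PI ^ r <= INR n ->
      irreducible n r a ->
      forall (t : nat) (M : R),
        is_tA n r a (1 / 2) t ->
        is_lam_m n r a M ->
        (1 - M) * INR t <= C.
Proof.
  intros r Hr. exists (2 * PI^2 * mix_const r).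
  intros n a Hpi _ t M [Hdist _] HM.
  destruct (least_circ_norm n r a (order_ge_2 r n Hr Hpi)) as [k0 [Hk0 Hmin]].
  pose proof (spectral_gap_le n r a M k0 Hk0 HM) as Hgap.
  pose proof (mixing_time_le n r a t k0 Hr Hk0 Hmin Hdist) as Hmix.
  set (w := rel_norm n r a k0) in *.
  assert (HPI : 0 < 2 * PI^2) by (pose proof PI_RGT_0; nra).
  apply Rle_trans with (2 * PI^2 * w^2 * INR t).
  - apply Rmult_le_compat_r; [apply pos_INR | exact Hgap].
  - rewrite Rmult_assoc, (Rmult_comm (w^2)). apply Rmult_le_compat_l; lra.
Qed.
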